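(* Let $\mathcal{C}$ be an additive category, $n\ge1$, and $\mathcal{X}$ a covariantly finite subcategory such that every left $\mathcal{X}$-approximation has a special $n$-cokernel with respect to $\mathcal{X}$; let $\Sigma:\mathcal{C}/\mathcal{X}\to\mathcal{C}/\mathcal{X}$ be the functor described below. Suppose given a commutative diagram in $\mathcal{C}$ $$\begin{array}{ccccccccc} A_0 & \xrightarrow{f_0} & A_1 & \xrightarrow{f_1} & \cdots & \xrightarrow{f_{n-1}} & A_n & \xrightarrow{f_n} & A_{n+1}\\ \downarrow{\scriptstyle h_0} & & \downarrow{\scriptstyle h_1} & & & & \downarrow{\scriptstyle h_n} & & \downarrow{\scriptstyle h_{n+1}}\\ B_0 & \xrightarrow{g_0} & B_1 & \xrightarrow{g_1} & \cdots & \xrightarrow{g_{n-1}} & B_n & \xrightarrow{g_n} & B_{n+1} \end{array}$$ whose rows are right $n$-exact sequences with $f_0$ and $g_0$ $\mathcal{X}$-monic. Let $(-1)^n\underline{a_{n+1}}:A_{n+1}\to\Sigma A_0$ and $(-1)^n\underline{b_{n+1}}:B_{n+1}\to\Sigma B_0$ be the last morphisms of standard right $(n+2)$-angles associated with the two rows (for any choices of comparison morphisms). Then $$(\underline{h_0},\underline{h_1},\dots,\underline{h_{n+1}})$$ is a morphism between the two standard right $(n+2)$-angles $A_0\xrightarrow{\underline{f_0}}A_1\to\cdots\xrightarrow{\underline{f_n}}A_{n+1}\xrightarrow{(-1)^n\underline{a_{n+1}}}\Sigma A_0$ and $B_0\xrightarrow{\underline{g_0}}B_1\to\cdots\xrightarrow{\underline{g_n}}B_{n+1}\xrightarrow{(-1)^n\underline{b_{n+1}}}\Sigma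 B_0$ in $\mathcal{C}/\mathcal{X}$; in particular $\Sigma\underline{h_0}\cdot\underline{a_{n+1}}=\underline{b_{n+1}}\cdot\underline{h_{n+1}}$.
   Context: Subcategories are full and closed under isomorphisms, direct sums and direct summands. $\mathcal{C}/\mathcal{X}$ is the quotient by morphisms factoring through objects of $\mathcal{X}$; $\underline{f}$ is the class of $f$. $f:A\to B$ is $\mathcal{X}$-monic if every morphism $A\to X$ with $X\in\mathcal{X}$ factors through $f$; a left $\mathcal{X}$-approximation of $A$ is an $\mathcal{X}$-monic $A\to X$ with $X\in\mathcal{X}$; $\mathcal{X}$ is covariantly finite if every object has one. A weak cokernel of $f$ is $g$ with $gf=0$ through which every $h$ with $hf=0$ factors. A sequence $A_0\xrightarrow{f_0}\cdots\xrightarrow{f_n}A_{n+1}$ is right $n$-exact ($(f_1,\dots,f_n)$ is an $n$-cokernel of $f_0$) if $f_k$ is a weak cokernel of $f_{k-1}$ for $1\le k\le n-1$ and $f_n$ is a cokernel of $f_{n-1}$; $f_0$ has a special $n$-cokernel w.r.t. $\mathcal{X}$ if it has an $n$-cokernel whose intermediate objects $X_2,\dots,X_n$ lie in $\mathcal{X}$. The functor $\Sigma$: for each $A\in\mathcal{C}$ fix a right $n$-exact sequence $A\xrightarrow{\alpha_0}X_1\xrightarrow{\alpha_1}\cdots\xrightarrow{\alpha_{n-1}}X_n\xrightarrow{\alpha_n}\Sigma A$ with $\alpha_0$ a left $\mathcal{X}$-approximation and $X_i\in\mathcal{X}$; for $f:A\to A'$ choose a commutative ladder from this sequence to the one of $A'$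 starting with $f$ and ending with $g:\Sigma A\to\Sigma A'$, and put $\Sigma\underline f=\underline g$ (this is a well-defined additive functor). Standard right $(n+2)$-angle: given a right $n$-exact sequence $A_0\xrightarrow{f_0}A_1\xrightarrow{f_1}\cdots\xrightarrow{f_n}A_{n+1}$ with $f_0$ $\mathcal{X}$-monic, choose morphisms $a_i$ ($1\le i\le n+1$) forming a commutative ladder from it to the fixed sequence $A_0\xrightarrow{\alpha_0}X_1\to\cdots\to X_n\xrightarrow{\alpha_n}\Sigma A_0$ with $1_{A_0}$ in the first position and $a_{n+1}:A_{n+1}\to\Sigma A_0$ last. The sequence $A_0\xrightarrow{\underline{f_0}}A_1\xrightarrow{\underline{f_1}}\cdots\xrightarrow{\underline{f_n}}A_{n+1}\xrightarrow{(-1)^n\underline{a_{n+1}}}\Sigma A_0$ in $\mathcal{C}/\mathcal{X}$ is a standard right $(n+2)$-angle. *)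

From HB Require Import structures.
From mathcomp Require Import all_boot all_algebra.
Set Implicit Arguments.
Unset Strict Implicit.
Unset Printing Implicit Defensive.
Import GRing.Theory.
Local Open Scope ring_scope.

Record PreAdd := {
  Obj : Type;
  Hom : Obj -> Obj -> zmodType;
  idm : forall A, Hom A A;
  comp : forall A B D, Hom B D -> Hom A B -> Hom A D;
  compA : forall A B D E (h : Hom D E) (g : Hom B D) (f : Hom A B),
      comp h (comp g f) = comp (comp h g) f;
  comp1l : forall A B (f : Hom A B), comp (idm B) f = f;
  comp1r : forall A B (f : Hom A B), comp f (idm A) = f;
  compDl : forall A B D (g1 g2 : Hom B D) (f : Hom A B),
      comp (g1 + g2) f = comp g1 f + comp g2 f;
  compDr : forall A B D (g : Hom B D) (f1 f2 : Hom A B),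
      comp g (f1 + f2) = comp g f1 + comp g f2 }.

Arguments idm {C} A : rename.
Arguments comp {C A B D} g f : rename.
Arguments Hom {C} A B : rename.
Notation "g \oc f" := (comp g f) (at level 40, left associativity).

Section Cat.
Variable C : PreAdd.

Definition is_biproduct (A B S : Obj C) (i1 : Hom A S) (i2 : Hom B S)
    (p1 : Hom S A) (p2 : Hom S B) : Prop :=
  [/\ p1 \oc i1 = idm A, p2 \oc i2 = idm B, p1 \oc i2 = 0, p2 \oc i1 = 0
    & i1 \oc p1 + i2 \oc p2 = idm S].

Definition is_additive : Prop :=
  (exists Z : Obj C, idm Z = 0) /\
  forall A B : Obj C, exists S (i1 : Hom A S) (i2 : Hom B S)
    (p1 : Hom S A) (p2 : Hom S B), is_biproduct i1 i2 p1 p2.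

Definition is_iso (A B : Obj C) : Prop :=
  exists (f : Hom A B) (g : Hom B A), g \oc f = idm A /\ f \oc g = idm B.

(* a (full) subcategory, given by its objects, closed under isomorphisms,
   direct sums and direct summands *)
Definition is_subcategory (X : Obj C -> Prop) : Prop :=
  [/\ (forall A B, X A -> is_iso A B -> X B),
      (forall A B S (i1 : Hom A S) (i2 : Hom B S) p1 p2,
          is_biproduct i1 i2 p1 p2 -> X A -> X B -> X S)
    & (forall A B S (i1 : Hom A S) (i2 : Hom B S) p1 p2,
          is_biproduct i1 i2 p1 p2 -> X S -> X A)].

Variable X : Obj C -> Prop.

Definition factors_through_X (A B : Obj C) (f : Hom A B) : Prop :=
  exists (Y : Obj C) (u : Hom A Y) (v : Hom Y B), X Y /\ f = v \oc u.

(* equality of classes in the quotient C/X: underline f = underline g *)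
Definition qeq (A B : Obj C) (f g : Hom A B) : Prop := factors_through_X (f - g).

Definition X_monic (A B : Obj C) (f : Hom A B) : Prop :=
  forall (Y : Obj C) (u : Hom A Y), X Y -> exists v : Hom B Y, u = v \oc f.

Definition left_approx (A B : Obj C) (f : Hom A B) : Prop := X_monic f /\ X B.

Definition covariantly_finite : Prop :=
  forall A : Obj C, exists (B : Obj C) (f : Hom A B), left_approx f.

Definition weak_cokernel (A B D : Obj C) (f : Hom A B) (g : Hom B D) : Prop :=
  g \oc f = 0 /\
  forall (E : Obj C) (h : Hom B E), h \oc f = 0 -> exists k : Hom D E, h = k \oc g.

Definition cokernel (A B D : Obj C) (f : Hom A B) (g : Hom B D) : Prop :=
  weak_cokernel f g /\
  forall (E : Obj C) (k1 k2 : Hom D E), k1 \oc g = k2 \oc g -> k1 = k2.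

Record Seq := MkSeq { sobj : nat -> Obj C;
                      smor : forall i, Hom (sobj i) (sobj i.+1) }.

Definition scons (A : Obj C) (s : Seq) (f : Hom A (sobj s 0)) : Seq :=
  let o := fun i => match i with 0 => A | j.+1 => sobj s j end in
  @MkSeq o (fun i => match i return Hom (o i) (o i.+1) with
                     | 0 => f | j.+1 => smor s j end).
Arguments scons {A} s f.

(* s_0 -> ... -> s_{n+1} is right n-exact *)
Definition right_n_exact (n : nat) (s : Seq) : Prop :=
  (forall k, (k.+1 < n)%N -> weak_cokernel (smor s k) (smor s k.+1)) /\
  (forall k, k.+1 = n -> cokernel (smor s k) (smor s k.+1)).

(* f : A -> X1 has a special n-cokernel w.r.t. X :
   a right n-exact A -f-> X1 -> X2 -> ... -> Xn -> Y with X2,...,Xn in X *)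
Definition has_special_n_cokernel (n : nat) (A X1 : Obj C) (f : Hom A X1) : Prop :=
  exists (Z : Seq) (d1 : Hom X1 (sobj Z 0)),
    let s := scons (scons Z d1) f in
    right_n_exact n s /\ forall i, (2 <= i <= n)%N -> X (sobj s i).

Definition ladder (n : nat) (s t : Seq) (h : forall i, Hom (sobj s i) (sobj t i)) : Prop :=
  forall i, (i <= n)%N -> h i.+1 \oc smor s i = smor t i \oc h i.

Definition signn (n : nat) (A B : Obj C) (f : Hom A B) : Hom A B :=
  if odd n then - f else f.

(* The data fixing Sigma: for every A a right n-exact sequence
   A -al A-> X_1 -> ... -> X_n -> Sigma A  (X_1 = sobj (tl A) 0,
   Sigma A = sobj (tl A) n), al A a left X-approximation, X_i in X. *)
Definition fixed_seq (tl : Obj C -> Seq) (al : forall A, Hom A (sobj (tl A) 0))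
    (A : Obj C) : Seq := scons (tl A) (al A).

Arguments fixed_seq : clear implicits.

Definition sigma_data_ok (n : nat) (tl : Obj C -> Seq)
    (al : forall A, Hom A (sobj (tl A) 0)) : Prop :=
  forall A : Obj C,
    [/\ right_n_exact n (fixed_seq tl al A), left_approx (al A)
      & forall i, (1 <= i <= n)%N -> X (sobj (fixed_seq tl al A) i)].

End Cat.
Arguments fixed_seq {C} tl al A.
Arguments sigma_data_ok {C} X n tl al.
Arguments ladder {C} n s t h.

Arguments Seq C : clear implicits.

(* The difference d_i := g_i a_i - b_i h_i is a ladder from the row s to the
   fixed sequence F of Sigma B_0 that starts with d_0 = 0.  Since the rows of F
   compose to zero and s is right n-exact, one builds inductively maps
   e_j : s_(j+1) -> F_j with (d_(j+1) - F_j e_j) s_j = 0 (a partial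
   null-homotopy); at the last step the cokernel property of s_n forces
   d_(n+1) = F_n k, and F_n = X_n lies in X, so d_(n+1) vanishes in C/X. *)

From Pilot Require Import Defs.
From mathcomp Require Import all_boot ssralg.
Set Implicit Arguments.
Unset Strict Implicit.
Unset Printing Implicit Defensive.
Import GRing.Theory.
Local Open Scope ring_scope.

Section PreAdditive.
Variable C : PreAdd.

Lemma comp0r (A B D : Obj C) (g : Hom B D) : g \oc (0 : Hom A B) = 0.
Proof. by apply: (addrI (g \oc 0)); rewrite -compDr !addr0. Qed.

Lemma comp0l (A B D : Obj C) (f : Hom A B) : (0 : Hom B D) \oc f = 0.
Proof. by apply: (addrI ((0 : Hom B D) \oc f)); rewrite -compDl !addr0. Qed.

Lemma compNr (A B D : Obj C) (g : Hom B D) (f : Hom A B) :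
  g \oc (- f) = - (g \oc f).
Proof. by apply/eqP; rewrite -addr_eq0 addrC -compDr addrN comp0r. Qed.

Lemma compNl (A B D : Obj C) (g : Hom B D) (f : Hom A B) :
  (- g) \oc f = - (g \oc f).
Proof. by apply/eqP; rewrite -addr_eq0 addrC -compDl addrN comp0l. Qed.

Lemma compBr (A B D : Obj C) (g : Hom B D) (f1 f2 : Hom A B) :
  g \oc (f1 - f2) = g \oc f1 - g \oc f2.
Proof. by rewrite compDr compNr. Qed.

Lemma compBl (A B D : Obj C) (g1 g2 : Hom B D) (f : Hom A B) :
  (g1 - g2) \oc f = g1 \oc f - g2 \oc f.
Proof. by rewrite compDl compNl. Qed.

Lemma signn_compr n (A B D : Obj C) (g : Hom B D) (f : Hom A B) :
  g \oc signn n f = signn n (g \oc f).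
Proof. by rewrite /signn; case: ifP; rewrite ?compNr. Qed.

Lemma signn_compl n (A B D : Obj C) (g : Hom B D) (f : Hom A B) :
  signn n g \oc f = signn n (g \oc f).
Proof. by rewrite /signn; case: ifP; rewrite ?compNl. Qed.

Lemma right_n_exact_comp0 n (s : Seq C) :
  right_n_exact n s -> forall j, (j < n)%N -> smor s j.+1 \oc smor s j = 0.
Proof.
move=> [Hw Hc] j; rewrite leq_eqVlt => /orP[/eqP Ej | Hj].
  by case: (Hc j Ej) => [[]].
by case: (Hw j Hj).
Qed.

Lemma ladder_comp n (s t u : Seq C) h k :
  ladder n t u k -> ladder n s t h -> ladder n s u (fun i => k i \oc h i).
Proof.
by move=> Hk Hh i Hi; rewrite -Defs.compA Hh // !Defs.compA Hk.
Qed.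

Lemma ladderB n (s t : Seq C) h1 h2 :
  ladder n s t h1 -> ladder n s t h2 -> ladder n s t (fun i => h1 i - h2 i).
Proof. by move=> H1 H2 i Hi; rewrite compBl compBr H1 ?H2. Qed.

Section NullHomotopy.
Variables (n : nat) (s F : Seq C) (d : forall i, Hom (sobj s i) (sobj F i)).
Hypotheses (Hs : right_n_exact n s) (HF : right_n_exact n F).
Hypotheses (Hd : ladder n s F d) (Hd0 : d 0%N = 0).

Lemma ladder0_partial_homotopy j : (j < n)%N ->
  exists e : Hom (sobj s j.+1) (sobj F j),
    (d j.+1 - smor F j \oc e) \oc smor s j = 0.
Proof.
elim: j => [|j IH] Hj.
  by exists 0; rewrite comp0r subr0 Hd // Hd0 comp0r.
have [e He] := IH (ltnW Hj).
have [_ /(_ _ _ He) [k Hk]] := Hs.1 j Hj.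
exists k; rewrite compBl -Defs.compA -Hk compBr Defs.compA.
by rewrite (right_n_exact_comp0 HF) 1?ltnW // comp0l subr0 Hd ?subrr // ltnW.
Qed.

Lemma ladder0_last_factors : (0 < n)%N ->
  exists k : Hom (sobj s n.+1) (sobj F n), d n.+1 = smor F n \oc k.
Proof.
case: n Hs HF Hd ladder0_partial_homotopy => // m Hs' HF' Hd' Hhom _.
have [e He] := Hhom m (ltnSn m).
have [[_ /(_ _ _ He) [k Hk]] s_epi] := Hs'.2 m erefl.
exists k; apply: s_epi.
rewrite Hd' // -Defs.compA -Hk compBr Defs.compA (right_n_exact_comp0 HF') //.
by rewrite comp0l subr0.
Qed.

End NullHomotopy.

Variable X : Obj C -> Prop.

Lemma qeq_eq (Y A B : Obj C) (f g : Hom A B) : X Y -> f = g -> qeq X f g.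
Proof.
move=> HY ->; exists Y, 0, 0; split => //.
by rewrite subrr comp0l.
Qed.

Lemma qeqN (A B : Obj C) (f1 f2 : Hom A B) :
  qeq X f1 f2 -> qeq X (- f1) (- f2).
Proof.
move=> [Y [u [v [HY E]]]]; exists Y, u, (- v); split => //.
by rewrite compNl -E opprD.
Qed.

Lemma qeq_signn n (A B : Obj C) (f1 f2 : Hom A B) :
  qeq X f1 f2 -> qeq X (signn n f1) (signn n f2).
Proof. by rewrite /signn; case: ifP => // _; apply: qeqN. Qed.

Lemma qeq_factors (A B Y : Obj C) (f g : Hom A B) (v : Hom Y B) (k : Hom A Y) :
  X Y -> f - g = v \oc k -> qeq X f g.
Proof. by move=> HY E; exists Y, k, v. Qed.

End PreAdditive.

Theorem lemma3p3 (C : PreAdd) (n : nat) (X : Obj C -> Prop)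
  (HC : is_additive C) (Hn : (1 <= n)%N) (HX : is_subcategory X)
  (Hcf : covariantly_finite X)
  (Hspec : forall (A X1 : Obj C) (u : Hom A X1),
      left_approx X u -> has_special_n_cokernel X n u)
  (* the fixed sequences defining Sigma *)
  (tl : Obj C -> Seq C) (al : forall A : Obj C, Hom A (sobj (tl A) 0))
  (Hsig : sigma_data_ok X n tl al)
  (* the commutative diagram with right n-exact rows *)
  (s t : Seq C) (h : forall i, Hom (sobj s i) (sobj t i))
  (Hs : right_n_exact n s) (Ht : right_n_exact n t)
  (Hs0 : X_monic X (smor s 0)) (Ht0 : X_monic X (smor t 0))
  (Hh : ladder n s t h)
  (* comparison morphisms a_i, b_i of the standard right (n+2)-angles *)
  (a : forall i, Hom (sobj s i) (sobj (fixed_seq tl al (sobj s 0)) i))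
  (Ha : ladder n s (fixed_seq tl al (sobj s 0)) a) (Ha0 : a 0%N = idm (sobj s 0))
  (b : forall i, Hom (sobj t i) (sobj (fixed_seq tl al (sobj t 0)) i))
  (Hb : ladder n t (fixed_seq tl al (sobj t 0)) b) (Hb0 : b 0%N = idm (sobj t 0))
  (* a ladder defining Sigma h_0 = class of (g (n+1)) *)
  (g : forall i, Hom (sobj (fixed_seq tl al (sobj s 0)) i)
                     (sobj (fixed_seq tl al (sobj t 0)) i))
  (Hg : ladder n (fixed_seq tl al (sobj s 0)) (fixed_seq tl al (sobj t 0)) g)
  (Hg0 : g 0%N = h 0%N) :
  (forall i, (i <= n)%N -> qeq X (h i.+1 \oc smor s i) (smor t i \oc h i)) /\
  qeq X (g n.+1 \oc signn n (a n.+1)) (signn n (b n.+1) \oc h n.+1) /\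
  qeq X (g n.+1 \oc a n.+1) (b n.+1 \oc h n.+1).
Proof.
set F := fixed_seq tl al (sobj t 0).
have [HF _ XF] := Hsig (sobj t 0).
have XFn : X (sobj F n) by apply: XF; rewrite Hn leqnn.
have Hd := ladderB (ladder_comp Hg Ha) (ladder_comp Hb Hh).
have Hd0 : g 0%N \oc a 0%N - b 0%N \oc h 0%N = 0.
  by rewrite Ha0 Hb0 comp1l comp1r Hg0 subrr.
have [k Ek] := ladder0_last_factors Hs HF Hd Hd0 Hn.
have main : qeq X (g n.+1 \oc a n.+1) (b n.+1 \oc h n.+1).
  exact: qeq_factors XFn Ek.
split; first by move=> i Hi; apply: qeq_eq XFn _; rewrite Hh.
split=> //.
by rewrite signn_compr signn_compl; apply: qeq_signn.
Qed.
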